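(* For every $\varepsilon>0$ and $v\in\mathbb R$ there exist constants $A,B>0$ and $p_\varepsilon>0$ such that for all $p<p_\varepsilon$ and all $n\ge 1$, \[\mathbb P\big(T^p_{site}((0,0),(n,\lceil vn\rceil))\le n(v+1-\varepsilon)\big)\le A\exp(-Bn).\]
   Context: Site percolation model with parameter $p\in[0,1]$: each site (vertex) of $\mathbb Z^2$ receives an independent weight equal to $0$ with probability $p$ and $1$ with probability $1-p$. A path $(z_0,z_1,\dots)$ is semi-directed if $z_{k+1}-z_k\in\{(1,0),(0,1),(0,-1)\}$ for all $k$. The passage time of a path is the sum of the weights of the sites it visits, and $T^p_{site}(u,w)$ is the infimum of passage times over semi-directed paths from $u$ to $w$. *)

From HB Require Import structures.
From mathcomp Require Import all_boot all_order all_algebra.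
From mathcomp Require Import all_classical all_reals all_analysis.
Set Implicit Arguments. Unset Strict Implicit. Unset Printing Implicit Defensive.
Import Order.TTheory GRing.Theory Num.Theory.
Local Open Scope classical_set_scope.
Local Open Scope ring_scope.

Definition site := (int * int)%type.

Definition sd_step (z z' : site) : bool :=
  [|| (z'.1 == z.1 + 1) && (z'.2 == z.2),
      (z'.1 == z.1) && (z'.2 == z.2 + 1)
    | (z'.1 == z.1) && (z'.2 == z.2 - 1)].

Definition sd_path_from_to (u w : site) (s : seq site) : Prop :=
  path sd_step u s /\ last u s = w.

Definition weight (omega : site -> bool) (z : site) : nat := nat_of_bool (omega z).

Definition passage_time (omega : site -> bool) (u : site) (s : seq site) : nat :=
  \sum_(z <- u :: s) weight omega z.

Definition T_site {R : realType} (omega : site -> bool) (u w : site) : \bar R :=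
  ereal_inf [set ((passage_time omega u s)%:R)%:E | s in [set s | sd_path_from_to u w s]].

(* omega is a family of independent site weights, each equal to 0 with
   probability p and to 1 with probability 1 - p, under P. *)
Definition site_percolation {R : realType} {d : measure_display}
  {Omega : measurableType d} (P : probability Omega R) (p : R)
  (omega : Omega -> site -> bool) : Prop :=
  (forall z b, measurable [set x | omega x z = b]) /\
  (forall (S : seq site) (b : site -> bool), uniq S ->
     P (\bigcap_(z in [set` S]) [set x | omega x z = b z]) =
     (\prod_(z <- S) (if b z then 1 - p else p))%:E).

(* If T_site((0,0),(n,⌈vn⌉)) <= n(v+1-ε), some semi-directed path to (n,⌈vn⌉)
   has passage time at most n(v+1-ε). Erasing its loops and keeping its first
   K = n + |⌈vn⌉| steps (there are at least that many) leaves a self-avoiding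
   walk through K+1 distinct sites, at most n(v+1-ε) of which have weight 1,
   so more than εn have weight 0. The walk together with the mask of its
   weight-0 sites is one of 3^K 2^(K+1) codes, and by independence the masked
   sites of a fixed code all have weight 0 with probability at most p^(εn).
   Since K <= c n for a constant c, the union bound gives 2 (6^c p^ε)^n, which
   decays exponentially once p is small. *)

From HB Require Import structures.
From mathcomp Require Import all_boot all_order all_algebra.
From mathcomp Require Import all_classical all_reals all_analysis.
From mathcomp Require Import zify lra.
Import Order.TTheory GRing.Theory Num.Theory.
Local Open Scope classical_set_scope.
Local Open Scope ring_scope.

Lemma passage_time_count omega u s : passage_time omega u s = count omega (u :: s).
Proof.
rewrite -sum1_count big_mkcond; apply: eq_bigr => z _.
by rewrite /weight; case: (omega z).
Qed.

Definition sd_move (u : site) (i : 'I_3) : site :=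
  match val i with
  | O => (u.1 + 1, u.2)
  | S O => (u.1, u.2 + 1)
  | _ => (u.1, u.2 - 1)
  end.

Fixpoint sd_walk (u : site) (ds : seq 'I_3) : seq site :=
  if ds is i :: ds' then sd_move u i :: sd_walk (sd_move u i) ds' else [::].

Lemma size_sd_walk u ds : size (sd_walk u ds) = size ds.
Proof. by elim: ds u => //= i ds IH u; rewrite IH. Qed.

Lemma sd_path_walk {u s} : path sd_step u s -> exists ds, sd_walk u ds = s.
Proof.
elim: s u => [|z s IH] u /=; first by exists [::].
case/andP=> uz /IH[ds <-].
suff [i <-] : exists i, sd_move u i = z by exists (i :: ds).
case: z uz => z1 z2; rewrite /sd_step /= => /or3P[] /andP[/eqP-> /eqP->].
- by exists (@Ordinal 3 0 isT).
- by exists (@Ordinal 3 1 isT).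
- by exists (@Ordinal 3 2 isT).
Qed.

Lemma sd_path_dist_le_size {u s} : path sd_step u s ->
  (`|(last u s).1 - u.1| + `|(last u s).2 - u.2| <= size s)%N.
Proof.
elim: s u => [|z s IH] u /=; first by rewrite !subrr.
case/andP=> + /IH; rewrite /sd_step => /or3P[] /andP[/eqP-> /eqP->]; lia.
Qed.

Lemma leq_sum_uniq_subset (T : eqType) (f : T -> nat) (s s' : seq T) :
  uniq s' -> {subset s' <= s} -> (\sum_(z <- s') f z <= \sum_(z <- s) f z)%N.
Proof.
move=> uniq_s' s's.
apply: (@sub_le_big_seq _ addn _ leqnn (fun m n => leq_addr n m) 0 _ _ _ xpredT f) => z.
rewrite count_uniq_mem //; case: (boolP (z \in s')) => // /s's.
by rewrite -has_pred1 has_count.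
Qed.

Lemma sd_path_self_avoiding_prefix omega {u w s K} :
  sd_path_from_to u w s -> (K <= `|w.1 - u.1| + `|w.2 - u.2|)%N ->
  exists ds : K.-tuple 'I_3, uniq (u :: sd_walk u ds) /\
    (passage_time omega u (sd_walk u ds) <= passage_time omega u s)%N.
Proof.
case=> us <-; case: (shortenP us) => s' us' uniq_s' sub_s' hK.
have Ks' : (K <= size s')%N := leq_trans hK (sd_path_dist_le_size us').
have [ds ds_s'] := sd_path_walk (take_path K us').
have size_ds : size ds == K.
  by rewrite -(size_sd_walk u) ds_s' size_takel.
exists (Tuple size_ds); rewrite /= ds_s'; split; first exact: (take_uniq K.+1 uniq_s').
apply: leq_sum_uniq_subset; first exact: (take_uniq K.+1 uniq_s').
move=> z; rewrite !inE => /orP[->//|/mem_take/sub_s'->]; exact: orbT.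
Qed.

Lemma T_site_leP (R : realType) omega u w (t : R) :
  (T_site omega u w <= t%:E)%E <->
  exists2 s, sd_path_from_to u w s & (passage_time omega u s)%:R <= t.
Proof.
split=> [Tt|[s su st]]; last first.
  by apply: ge_ereal_inf; exists (passage_time omega u s)%:R%:E => //; exists s.
apply: contrapT => no_path.
suff : ((Num.floor t + 1)%:~R%:E <= @T_site R omega u w)%E.
  move/le_trans/(_ Tt); rewrite lee_fin real_leNgt ?num_real //.
  by rewrite real_floorD1_gt ?num_real.
apply: le_ereal_inf_tmp => _ [s su <-]; rewrite lee_fin.
have : Num.floor t < (passage_time omega u s)%:Z.
  rewrite real_floor_lt_int ?num_real // -pmulrn real_ltNge ?num_real //.
  by apply/negP => st; apply: no_path; exists s.
by rewrite pmulrn ler_int; lia.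
Qed.

Section site_events.
Context {d : measure_display} {Omega : measurableType d}
  {omega : Omega -> site -> bool}
  (omega_measurable : forall z b, measurable [set x | omega x z = b]).

Lemma measurable_cylinder (L : seq site) (Q : seq bool -> Prop) :
  measurable [set x | Q (map (omega x) L)].
Proof.
elim: L Q => [|z L IH] Q /=.
  have [Q0|Q0] := pselect (Q [::]).
    by rewrite (_ : [set _ | _] = setT) //; apply/seteqP; split.
  by rewrite (_ : [set _ | _] = set0) //; apply/seteqP; split.
rewrite (_ : [set _ | _] = \bigcup_(b : bool)
    ([set x | omega x z = b] `&` [set x | Q (b :: map (omega x) L)])).
  apply: countable_bigcupT_measurable; first exact: countableP.
  by move=> b; apply: measurableI; last exact: (IH (fun l => Q (b :: l))).
apply/seteqP; split=> x /=; first by exists (omega x z).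
by case=> b _ [<-].
Qed.

Lemma measurable_T_site_le (R : realType) u w (t : R) :
  measurable [set x | (T_site (omega x) u w <= t%:E)%E].
Proof.
rewrite (_ : [set _ | _] = \bigcup_(s : seq site)
    [set x | sd_path_from_to u w s /\ (passage_time (omega x) u s)%:R <= t]).
  apply: countable_bigcupT_measurable; first exact: countableP.
  move=> s; pose Q l := sd_path_from_to u w s /\ (count id l)%:R <= t.
  rewrite (_ : [set _ | _] = [set x | Q (map (omega x) (u :: s))]).
    exact: measurable_cylinder.
  by apply: eq_set => x; rewrite /Q count_map passage_time_count.
apply/seteqP; split=> x /=; first by case/T_site_leP=> s su st; exists s.
by case=> s _ [su st]; apply/T_site_leP; exists s.
Qed.

Lemma measurable_zero_sites (Z : seq site) :
  measurable (\bigcap_(z in [set` Z]) [set x | omega x z = false]).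
Proof. by apply: fin_bigcap_measurable; first exact: finite_seq. Qed.

End site_events.

Lemma measure_le_card_cover {d} {T : measurableType d} {R : realType}
    {mu : {measure set T -> \bar R}} {I : finType} {A : set T} {E : I -> set T}
    (c : R) :
  measurable A -> (forall i, measurable (E i)) -> A `<=` \bigcup_i E i ->
  (forall i, mu (E i) <= c%:E)%E -> (mu A <= (#|I|%:R * c)%:E)%E.
Proof.
move=> mA mE AE Ec.
apply: le_trans (content_sub_fsum mu finite_finset (fun i _ => mE i) mA AE) _.
rewrite (_ : [set: I] = [set` enum I]); last first.
  by apply/seteqP; split=> i //= _; rewrite mem_enum.
rewrite -fsbig_seq ?enum_uniq // big_enum /=.
apply: (@le_trans _ _ (\sum_(i in I) c%:E)%E); first exact: lee_sum.
by rewrite sumEFin sumr_const mulr_natl.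
Qed.

Lemma prob_zero_sites {R : realType} {d} {Omega : measurableType d}
    {P : probability Omega R} {p omega} {Z : seq site} :
  site_percolation P p omega -> uniq Z ->
  P (\bigcap_(z in [set` Z]) [set x | omega x z = false]) = (p ^+ size Z)%:E.
Proof.
case=> _ /(_ Z (fun=> false)) /[apply] ->.
by congr (_%:E); elim: Z => [|z Z IH]; rewrite ?big_nil ?big_cons ?IH ?exprS.
Qed.

Definition walk_code (K : nat) := (K.-tuple 'I_3 * K.+1.-tuple bool)%type.

Lemma card_walk_code K : #|{: walk_code K}| = (3 ^ K * 2 ^ K.+1)%N.
Proof. by rewrite card_prod !card_tuple card_ord card_bool. Qed.

Definition code_sites u {K} (c : walk_code K) := u :: sd_walk u c.1.

Definition code_marked u {K} (c : walk_code K) := mask c.2 (code_sites u c).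

Lemma sd_path_zero_code omega {u w s K} :
  sd_path_from_to u w s -> (K <= `|w.1 - u.1| + `|w.2 - u.2|)%N ->
  exists c : walk_code K, [/\ uniq (code_sites u c),
    (K.+1 <= size (code_marked u c) + passage_time omega u s)%N &
    {in code_marked u c, forall z, omega z = false}].
Proof.
move=> us Kuw; have [ds [uniq_ds ds_s]] := sd_path_self_avoiding_prefix omega us Kuw.
set S := u :: sd_walk u ds in uniq_ds ds_s *.
have size_S : size S = K.+1 by rewrite /= size_sd_walk size_tuple.
have size_b : size (map (negb \o omega) S) == K.+1 by rewrite size_map size_S.
exists (ds, Tuple size_b).
have -> : code_marked u (ds, Tuple size_b) = [seq z <- S | ~~ omega z].
  by rewrite filter_mask.
split=> //; last by move=> z; rewrite mem_filter => /andP[/negbTE].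
apply: leq_trans (leq_add (leqnn _) ds_s); rewrite passage_time_count -/S.
by rewrite size_filter addnC count_predC size_S.
Qed.

Lemma zero_sites_lower_bound {R : realFieldType} {v eps : R} {n K q z tau : nat} :
  1 <= q%:R * eps -> n%:R * (v + 1) <= K%:R -> (K.+1 <= z + tau)%N ->
  tau%:R <= n%:R * (v + 1 - eps) -> (n <= q * z)%N.
Proof.
move=> q_eps K_ge; rewrite -(ler_nat R) => Kzt tau_le; rewrite -(ler_nat R) natrM.
rewrite -addn1 !natrD in Kzt.
have n_ge0 : 0 <= n%:R :> R by [].
have q_ge0 : 0 <= q%:R :> R by [].
have : eps * n%:R + 1 <= z%:R by nra.
nra.
Qed.

Lemma absz_ceil_mul_le (R : realType) (v : R) (n : nat) :
  (`|Num.ceil (v * n%:R)| <= (Num.truncn `|v|).+1 * n)%N.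
Proof.
have /andP[ceil_gt ceil_ge] := real_ceil_itv (num_real (v * n%:R)).
have v_lt := real_truncnS_gt (num_real `|v|).
rewrite -ltnS -(ltr_nat R) natr_absz intr_norm -addn1 natrD natrM.
set T := (Num.truncn `|v|).+1 in v_lt *.
have n_ge0 : 0 <= n%:R :> R by [].
have v_le : `|v| * n%:R <= T%:R * n%:R by rewrite ler_wpM2r // ltW.
have vn_le := ler_wpM2r n_ge0 (ler_norm v).
have nvn_le := ler_wpM2r n_ge0 (ler_norm (- v)); rewrite normrN in nvn_le.
rewrite intrB in ceil_gt; apply/ltr_normlP; split; lra.
Qed.

Lemma walk_code_count_bound (R : realType) (n K c : nat) : (K <= c * n)%N ->
  ((3 ^ K * 2 ^ K.+1)%N%:R : R) * ((2 * 6 ^+ c)^-1) ^+ n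
  <= 2 * expR (- (ln 2 * n%:R)).
Proof.
move=> K_le.
have two_pos : (2 : R) \in Num.pos by rewrite posrE.
rewrite (mulrC (ln 2)) expRN expRM_natl (lnK two_pos) exprVn exprMn invfM.
rewrite mulrCA [2 * _]mulrC ler_wpM2l ?invr_ge0 ?exprn_ge0 //.
rewrite ler_pdivrMr ?exprn_gt0 // -exprM -!natrX -natrM ler_nat.
by rewrite expnS mulnCA -expnMn leq_mul2l /= leq_pexp2l.
Qed.

Section zero_code_events.
Context {d : measure_display} {Omega : measurableType d}
  (omega : Omega -> site -> bool) (u : site) (K n q : nat).

Definition zero_code_event (c : walk_code K) : set Omega :=
  if uniq (code_sites u c) && (n <= q * size (code_marked u c))%N
  then \bigcap_(z in [set` code_marked u c]) [set x | omega x z = false]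
  else set0.

Lemma measurable_zero_code_event c :
  (forall z b, measurable [set x | omega x z = b]) ->
  measurable (zero_code_event c).
Proof.
move=> omega_meas; rewrite /zero_code_event; case: ifP => _ //.
exact: measurable_zero_sites.
Qed.

Lemma zero_code_event_le (R : realType) (P : probability Omega R) p r c :
  site_percolation P p omega -> 0 <= p -> p <= r ^+ q -> 0 <= r -> r <= 1 ->
  (P (zero_code_event c) <= (r ^+ n)%:E)%E.
Proof.
move=> perc p_ge0 p_le r_ge0 r_le1; rewrite /zero_code_event.
case: ifP => [/andP[uniq_c n_le]|_]; last by rewrite measure0 lee_fin exprn_ge0.
rewrite (prob_zero_sites perc) ?mask_uniq // lee_fin.
apply: le_trans (ler_wiXn2l r_ge0 r_le1 n_le); rewrite exprM.
by apply: lerXn2r; rewrite ?nnegrE ?exprn_ge0.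
Qed.

Lemma T_site_le_sub_zero_code_events (R : realType) w (v eps : R) :
  (K <= `|w.1 - u.1| + `|w.2 - u.2|)%N -> n%:R * (v + 1) <= K%:R ->
  1 <= q%:R * eps ->
  [set x | (T_site (omega x) u w <= (n%:R * (v + 1 - eps))%:E)%E]
    `<=` \bigcup_c zero_code_event c.
Proof.
move=> K_le K_ge q_eps x /T_site_leP[s us s_le].
have [c [uniq_c K_lt zero_c]] := sd_path_zero_code (omega x) us K_le.
exists c => //; rewrite /zero_code_event uniq_c.
rewrite (zero_sites_lower_bound q_eps K_ge K_lt s_le).
by move=> z /zero_c.
Qed.

End zero_code_events.

Theorem lemma3p10 (R : realType) (eps v : R) (heps : 0 < eps) :
  exists A B peps : R, 0 < A /\ 0 < B /\ 0 < peps /\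
    forall (p : R), 0 <= p -> p <= 1 -> p < peps ->
    forall (n : nat), (1 <= n)%N ->
    forall (d : measure_display) (Omega : measurableType d)
           (P : probability Omega R) (omega : Omega -> site -> bool),
      site_percolation P p omega ->
      (P [set x | (T_site (omega x) (0%Z, 0%Z) (n%:Z, Num.ceil (v * n%:R))
                   <= (n%:R * (v + 1 - eps))%:E)%E]
      <= (A * expR (- (B * n%:R)))%:E)%E.
Proof.
pose c := (Num.truncn `|v|).+2; pose q := (Num.truncn eps^-1).+1.
(* There are at most 2 * 6^(c n) codes, each of probability at most r^n. *)
pose r : R := (2 * 6 ^+ c)^-1.
have six_c : 1 <= 6 ^+ c :> R by rewrite exprn_ege1 //; lra.
have r_gt0 : 0 < r by rewrite invr_gt0; lra.
have r_le1 : r <= 1 by rewrite invf_le1; lra.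
have q_eps : 1 <= q%:R * eps.
  by rewrite -ler_pdivrMr // mul1r ltW // real_truncnS_gt ?num_real.
exists 2, (ln 2), (r ^+ q); split=> //; split; first by rewrite ln_gt0 //; lra.
split=> [|p p_ge0 _ p_lt n _ d Omega P omega perc]; first exact: exprn_gt0.
set K := (n + `|Num.ceil (v * n%:R)|)%N.
have K_le : (K <= c * n)%N by have := absz_ceil_mul_le R v n; rewrite /K /c; lia.
have K_ge : n%:R * (v + 1) <= K%:R.
  rewrite /K natrD natr_absz intr_norm mulrDr mulr1 addrC lerD2l mulrC.
  exact: le_trans (real_ceil_ge (num_real _)) (ler_norm _).
apply: le_trans (measure_le_card_cover (mu := P) (r ^+ n) _ _
  (T_site_le_sub_zero_code_events omega _ _ n q _ _ _ _ _ K_ge q_eps) _) _.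
- exact: (measurable_T_site_le (proj1 perc) R).
- by move=> code; apply: measurable_zero_code_event; exact: (proj1 perc).
- by rewrite /= addn0 subr0.
- by move=> code; apply: zero_code_event_le perc _ (ltW p_lt) (ltW r_gt0) r_le1.
by rewrite lee_fin card_walk_code walk_code_count_bound.
Qed.
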